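(* Let $R$ be a ring with identity and $a,b,c,y\in R$. Then: (i) $y$ is both a right $(b,c)$-inverse and a right annihilator $(b,c)$-inverse of $a$ if and only if $y$ is the hybrid $(b,c)$-inverse of $a$, i.e. $yay=y$, $yR=bR$ and $y^\circ=c^\circ$; (ii) $y$ is both a left $(b,c)$-inverse and a left annihilator $(b,c)$-inverse of $a$ if and only if $yay=y$, ${}^\circ b={}^\circ y$ and $Rc=Ry$.
   Context: For $x\in R$: $xR=\{xr:r\in R\}$, $Rx=\{rx:r\in R\}$, $x^\circ=\{r: xr=0\}$, ${}^\circ x=\{r: rx=0\}$. $y$ is a left $(b,c)$-inverse of $a$ if $Ry\subseteq Rc$ and $yab=b$; a right $(b,c)$-inverse if $yR\subseteq bR$ and $cay=c$; a right annihilator $(b,c)$-inverse if $c^\circ\subseteq y^\circ$ and $yab=b$; a left annihilator $(b,c)$-inverse if ${}^\circ b\subseteq {}^\circ y$ and $cay=c$. *)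

From HB Require Import structures.
From mathcomp Require Import all_boot all_algebra.
Set Implicit Arguments. Unset Strict Implicit. Unset Printing Implicit Defensive.
Import GRing.Theory.
Local Open Scope ring_scope.

Definition subsetR {R : pzRingType} (A B : R -> Prop) : Prop := forall t, A t -> B t.
Definition eqsetR {R : pzRingType} (A B : R -> Prop) : Prop := forall t, A t <-> B t.

(* xR, Rx, x^o (right annihilator), ^o x (left annihilator) *)
Definition rmulset {R : pzRingType} (x : R) : R -> Prop := fun t => exists r, t = x * r.
Definition lmulset {R : pzRingType} (x : R) : R -> Prop := fun t => exists r, t = r * x.
Definition rann {R : pzRingType} (x : R) : R -> Prop := fun r => x * r = 0.
Definition lann {R : pzRingType} (x : R) : R -> Prop := fun r => r * x = 0.

Definition left_bc_inverse {R : pzRingType} (a b c y : R) : Prop :=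
  subsetR (lmulset y) (lmulset c) /\ y * a * b = b.
Definition right_bc_inverse {R : pzRingType} (a b c y : R) : Prop :=
  subsetR (rmulset y) (rmulset b) /\ c * a * y = c.
Definition right_ann_bc_inverse {R : pzRingType} (a b c y : R) : Prop :=
  subsetR (rann c) (rann y) /\ y * a * b = b.
Definition left_ann_bc_inverse {R : pzRingType} (a b c y : R) : Prop :=
  subsetR (lann b) (lann y) /\ c * a * y = c.

Definition hybrid_bc_inverse {R : pzRingType} (a b c y : R) : Prop :=
  y * a * y = y /\ eqsetR (rmulset y) (rmulset b) /\ eqsetR (rann y) (rann c).

From HB Require Import structures.
From mathcomp Require Import all_boot all_algebra.
From Stdlib Require Import Setoid.
Import GRing.Theory.
Local Open Scope ring_scope.

(* (i): if y lies in bR and yab = b then yay = y, and conversely yay = y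
   together with b in yR gives yab = b; dually, c = (ca)y gives y^o in c^o,
   while y(ay - 1) = 0 and y^o in c^o give c(ay - 1) = 0.
   (ii) is (i) in the converse ring R^c, with the roles of b and c swapped. *)

Section RightInverses.

Variable R : pzRingType.
Implicit Types a b c e x y z : R.

Lemma rmulset_subsetP x z : subsetR (rmulset x) (rmulset z) <-> rmulset z x.
Proof.
split=> [xR_zR | [s ->] t [r ->]]; last by exists (s * r); rewrite mulrA.
by apply: xR_zR; exists 1; rewrite mulr1.
Qed.

Lemma rann_subset_lmulset x y : lmulset y x -> subsetR (rann y) (rann x).
Proof. by move=> [r ->] t yt0; rewrite /rann -mulrA yt0 mulr0. Qed.

Lemma mull_id_rmulset e x z : e * x = x -> rmulset x z -> e * z = z.
Proof. by move=> ex [r ->]; rewrite mulrA ex. Qed.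

Lemma mulr_id_rann_subset e x y :
  y * e = y -> subsetR (rann y) (rann x) -> x * e = x.
Proof.
move=> ye /(_ (e - 1)); rewrite /rann !mulrBr !mulr1 ye subrr.
by move=> /(_ erefl) /subr0_eq.
Qed.

Lemma right_rann_bc_inverseP a b c y :
  (right_bc_inverse a b c y /\ right_ann_bc_inverse a b c y) <->
  hybrid_bc_inverse a b c y.
Proof.
split=> [[[yR_bR cay] [cy_yy yab]] | [yay [yR_bR cy_yy]]].
  have y_in_bR : rmulset b y by apply/rmulset_subsetP.
  have b_in_yR : rmulset y b by exists (a * b); rewrite mulrA yab.
  have c_in_Ry : lmulset y c by exists (c * a); rewrite cay.
  split; first exact: mull_id_rmulset yab y_in_bR.
  split=> t; split.
  - exact: yR_bR.
  - by move: t; apply/rmulset_subsetP.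
  - exact: rann_subset_lmulset.
  - exact: cy_yy.
have y_in_bR : rmulset b y by apply/rmulset_subsetP=> t /yR_bR.
have b_in_yR : rmulset y b by apply/rmulset_subsetP=> t /yR_bR.
split; split.
- exact/rmulset_subsetP.
- rewrite -mulrA; apply: (mulr_id_rann_subset _ _ y); first by rewrite mulrA.
  by move=> t /cy_yy.
- by move=> t /cy_yy.
- exact: mull_id_rmulset yay b_in_yR.
Qed.

End RightInverses.

Section ConverseRing.

Variable R : pzRingType.
Implicit Types a b c u v x y : R.

Lemma eqsetR_sym (A B : R -> Prop) : eqsetR A B -> eqsetR B A.
Proof. by move=> AB t; split=> /AB. Qed.

Lemma mul3_converse x u v : (x : R^c) * u * v = v * u * x.
Proof. exact: mulrA v u x. Qed.

Lemma left_bc_inverse_converse a b c y :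
  left_bc_inverse a b c y <-> @right_bc_inverse R^c a c b y.
Proof. by rewrite /right_bc_inverse mul3_converse. Qed.

Lemma left_ann_bc_inverse_converse a b c y :
  left_ann_bc_inverse a b c y <-> @right_ann_bc_inverse R^c a c b y.
Proof. by rewrite /right_ann_bc_inverse mul3_converse. Qed.

Lemma hybrid_bc_inverse_converse a b c y :
  @hybrid_bc_inverse R^c a c b y <->
  y * a * y = y /\ eqsetR (lann b) (lann y) /\ eqsetR (lmulset c) (lmulset y).
Proof.
rewrite /hybrid_bc_inverse mul3_converse.
by split=> [] [yay [? ?]]; split=> //; split; apply: eqsetR_sym.
Qed.

End ConverseRing.

Theorem theorem2p10 (R : pzRingType) (a b c y : R) :
  ((right_bc_inverse a b c y /\ right_ann_bc_inverse a b c y) <->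
     hybrid_bc_inverse a b c y) /\
  ((left_bc_inverse a b c y /\ left_ann_bc_inverse a b c y) <->
     (y * a * y = y /\ eqsetR (lann b) (lann y) /\ eqsetR (lmulset c) (lmulset y))).
Proof.
split; first exact: right_rann_bc_inverseP.
rewrite left_bc_inverse_converse left_ann_bc_inverse_converse.
by rewrite -hybrid_bc_inverse_converse; apply: right_rann_bc_inverseP.
Qed.
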